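(* Let $G$ be a finite nested $p$-group with chain of centers $G=X_0>X_1>\dots>X_n\ge1$. If $p\in\mathrm{cd}(G)$, then $|G:X_1|=p^2$ and $|G':[X_1,G]|=p$.
   Context: $\mathrm{cd}(G)=\{\chi(1):\chi\in\mathrm{Irr}(G)\}$. For $\chi\in\mathrm{Irr}(G)$, $Z(\chi)=\{g\in G: |\chi(g)|=\chi(1)\}$. $G$ is nested if for all $\chi,\psi\in\mathrm{Irr}(G)$ either $Z(\chi)\le Z(\psi)$ or $Z(\psi)\le Z(\chi)$; then the distinct subgroups $Z(\chi)$ form a chain $G=X_0>X_1>\dots>X_n\ge1$, the chain of centers. *)

From HB Require Import structures.
From mathcomp Require Import all_boot all_order all_algebra all_fingroup all_solvable all_field all_character.
Set Implicit Arguments. Unset Strict Implicit. Unset Printing Implicit Defensive.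
Import GRing.Theory Num.Theory.
Local Open Scope ring_scope.

Definition in_cd (gT : finGroupType) (G : {group gT}) (d : algC) : Prop :=
  exists i : Iirr G, 'chi[G]_i 1%g = d.

(* G is nested: the centers Z(chi) of irreducible characters are totally
   ordered by inclusion.  'Z(chi)%CF is MathComp's cfcenter, which for a
   character chi is [set g in G | `|chi g| == chi 1]. *)
Definition nested (gT : finGroupType) (G : {group gT}) : Prop :=
  forall i j : Iirr G,
    ('Z('chi[G]_i)%CF \subset 'Z('chi[G]_j)%CF) \/
    ('Z('chi[G]_j)%CF \subset 'Z('chi[G]_i)%CF).

(* X is the second term X_1 of the chain of centers: X is a center Z(chi),
   X is proper in G, and every center properly contained in G lies in X. *)
Definition chain_X1 (gT : finGroupType) (G : {group gT}) (X : {set gT}) : Prop :=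
  [/\ exists i : Iirr G, 'Z('chi[G]_i)%CF = X,
      X \proper G &
      forall j : Iirr G, 'Z('chi[G]_j)%CF \proper G -> 'Z('chi[G]_j)%CF \subset X].

From HB Require Import structures.
From mathcomp Require Import all_boot all_order all_algebra all_fingroup all_solvable all_field all_character.
Import Order.TTheory GRing.Theory Num.Theory.
Set Implicit Arguments. Unset Strict Implicit. Unset Printing Implicit Defensive.

(* Let chi in Irr(G) have degree p and psi in Irr(G) have Z(psi) = X1.
   Lower bound: psi is nonlinear, so p^2 <= psi(1)^2 <= |G : Z(psi)| = |G : X1|.
   Upper bound: chi is induced from a linear character of a subgroup T of
   index p, so T' <= ker chi.  As G is nilpotent, G' is not contained in
   L = ker chi [G', G], so G/L has a nonlinear irreducible character theta;
   it has a linear constituent on T, whence theta(1) = p, and G' <= Z(theta)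
   gives |G : Z(theta)| = theta(1)^2 = p^2.  The proper center Z(theta) lies
   in X1, hence |G : X1| <= p^2.
   Commutator index: N = [X1, G] <= ker psi. *)

Section CharacterDegreesAndCenters.
Local Open Scope ring_scope.
Variables (gT : finGroupType) (G : {group gT}).

Lemma irr_linearE (i : Iirr G) : ('chi[G]_i \is a linear_char) = ('chi_i 1%g == 1).
Proof. by rewrite qualifE /= irr_char. Qed.

(* Irreducible degrees of a p-group are powers of p, so nonlinear ones are >= p. *)
Lemma nonlinear_irr1_ge (p : nat) (i : Iirr G) :
  prime p -> (p.-group G)%g -> ~~ ('chi[G]_i \is a linear_char) -> p%:R <= 'chi_i 1%g.
Proof.
move=> pr_p pG; rewrite irr_linearE.
have:= dvd_irr1_cardG i; rewrite irr1_degree dvdC_nat ler_nat pnatr_eq1.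
move: (irr_degree _) => d /pnat_dvd/(_ pG)/p_natP[k ->] pk_neq1.
rewrite -{1}(expn1 p) leq_exp2l ?prime_gt1 // lt0n.
by apply: contraNneq pk_neq1 => ->.
Qed.

Lemma sub_cfcenter_irr_linear (i : Iirr G) :
  (G \subset 'Z('chi[G]_i)%CF)%g = ('chi_i \is a linear_char).
Proof.
apply/idP/idP => [sGZ | lin_i].
  have:= (irr1_bound i).1; move: sGZ; rewrite -indexg_eq1 => /eqP->.
  rewrite irr_linearE irr1_degree -natrX ler_nat pnatr_eq1 -{2}(exp1n 2).
  rewrite leq_exp2r // => d_le1.
  by rewrite eqn_leq d_le1 -(ltr_nat algC) -irr1_degree irr1_gt0.
apply/subsetP=> x Gx.
by rewrite irr_cfcenterE // (normC_lin_char lin_i) // (lin_char1 lin_i).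
Qed.

Lemma cfcenter_index_ge_p2 (p : nat) (i : Iirr G) :
  prime p -> (p.-group G)%g -> ~~ ('chi_i \is a linear_char) ->
  (p ^ 2 <= #|G : 'Z('chi_i)%CF|%g)%N.
Proof.
move=> pr_p pG nlin_i; have ge_p := nonlinear_irr1_ge pr_p pG nlin_i.
have := le_trans (ler_pM (ler0n _ _) (ler0n _ _) ge_p ge_p) (irr1_bound i).1.
by rewrite -expr2 -natrX ler_nat.
Qed.

(* Z(chi)/ker chi is central in G/ker chi, i.e. [Z(chi), G] <= ker chi. *)
Lemma commg_cfcenter_sub_cfker (i : Iirr G) :
  ([~: 'Z('chi_i)%CF, G] \subset cfker 'chi_i)%g.
Proof.
have nKG := normal_norm (cfker_normal 'chi_i).
rewrite -quotient_cents2 ?(subset_trans (cfcenter_sub _)) //.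
exact: subset_trans (cfcenter_subset_center _) (subsetIr _ _).
Qed.

Lemma nonlinear_irr_mod (L : {group gT}) :
  (L <| G)%g -> ~~ (G^`(1) \subset L)%g ->
  exists k : Iirr G, ~~ ('chi_k \is a linear_char) /\ (L \subset cfker 'chi_k)%g.
Proof.
move=> nsLG not_sG'L.
have [k1 nlin_k1] : exists k1 : Iirr (G / L)%G, ~~ ('chi_k1 \is a linear_char).
  apply/existsP; rewrite -negb_forall; apply: contra not_sG'L => /forallP/char_abelianP.
  rewrite -quotient_sub1 ?(subset_trans (der_sub 1 G) (normal_norm nsLG)) //.
  by rewrite quotient_der ?normal_norm // => /derG1P->.
by exists (mod_Iirr k1); rewrite (mod_IirrE _ nsLG) cfMod_lin_charE // cfker_mod.
Qed.

(* If T' <= ker chi_k, then Res_T chi_k has a linear constituent lambda, and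
   chi_k is a constituent of Ind_T lambda, of degree |G : T|. *)
Lemma irr1_le_index_der1_ker (T : {group gT}) (k : Iirr G) :
  (T \subset G)%g -> (T^`(1) \subset cfker 'chi_k)%g -> 'chi_k 1%g <= (#|G : T|%g)%:R.
Proof.
move=> sTG sT'K; have [l sl] := constt_cfRes_irr T k.
have lin_l : 'chi_l \is a linear_char.
  rewrite lin_irr_der1 (subset_trans _ (cfker_constt (cfRes_char T (irr_char k)) sl)) //.
  by rewrite cfker_Res ?irr_char // subsetI der_sub.
have k_Ind : k \in irr_constt ('Ind[G] 'chi_l) by rewrite constt_Ind_Res.
have := char1_ge_constt (cfInd_char G (irr_char l)) k_Ind.
by rewrite cfInd1 // (lin_char1 lin_l) mulr1.
Qed.

(* If [G', G] <= ker chi_k then G' <= Z(chi_k), so G/Z(chi_k) is abelian and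
   the degree bound chi_k(1)^2 <= |G : Z(chi_k)| is an equality. *)
Lemma irr1_sq_index_cfcenter (k : Iirr G) :
  ([~: G^`(1), G] \subset cfker 'chi_k)%g -> 'chi_k 1%g ^+ 2 = (#|G : 'Z('chi_k)%CF|%g)%:R.
Proof.
move=> sRK; apply: irr1_abelian_bound; apply: sub_der1_abelian.
have nKG := normal_norm (cfker_normal 'chi_k).
have nG'K := subset_trans (der_sub 1 G) nKG.
rewrite -(quotientSGK nG'K (normal_sub (cfker_center_normal _))) cfcenter_eq_center.
by rewrite subsetI quotientS ?der_sub //= quotient_cents2.
Qed.

Lemma der1_sub_cfker_Ind_linear (T : {group gT}) (s : Iirr T) :
  (T <| G)%g -> 'chi_s \is a linear_char -> (T^`(1) \subset cfker ('Ind[G] 'chi_s))%g.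
Proof.
move=> nsTG lin_s; rewrite cfker_Ind ?irr_char ?irr_neq0 ?(normal_sub nsTG) //.
rewrite sub_gcore -?lin_irr_der1 //.
exact: char_norm_trans (der_char 1 T) (normal_norm nsTG).
Qed.

End CharacterDegreesAndCenters.

Section GroupTheory.
Local Open Scope group_scope.
Variable gT : finGroupType.

(* A p-group G not contained in a subgroup Z has a normal subgroup A not in Z
   with a subgroup B <= Z of index p: take A minimal normal outside Z. *)
Lemma normal_index_p_step (G Z : {group gT}) (p : nat) :
  prime p -> p.-group G -> ~~ (G \subset Z) ->
  exists A B : {group gT},
    [/\ A <| G, B \subset A, #|A : B| = p, B \subset Z & ~~ (A \subset Z)].
Proof.
move=> pr_p pG not_sGZ.
pose outside := [pred A : {group gT} | (A <| G) && ~~ (A \subset Z)].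
have outsideG : outside G by rewrite /= normal_refl.
have [A /mingroupP[/andP[nsAG not_sAZ] minA] _] := mingroup_exists outsideG.
have [a cardA] : {a | #|A| = (p ^ a.+1)%N}.
  have [[|a] cardA] := p_natP (pgroupS (normal_sub nsAG) pG); last by exists a.
  by case/negP: not_sAZ; rewrite (card1_trivg cardA) sub1G.
have a_le : (a <= logn p #|A|)%N by rewrite cardA pfactorK.
have [B [sBA nsBG cardB]] := normal_pgroup pG nsAG a_le.
exists A, B; split=> //.
  have:= Lagrange sBA; rewrite cardA cardB expnS mulnC => /eqP.
  by rewrite eqn_pmul2r ?expn_gt0 ?prime_gt0 // => /eqP.
apply: contraNT not_sAZ => not_sBZ.
have eBA := minA B (introT andP (conj nsBG not_sBZ)) sBA.
by move: cardB; rewrite eBA cardA => /eqP; rewrite eqn_exp2l ?prime_gt1 // => /eqP/esym/n_Sn.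
Qed.

(* In a nilpotent group, a normal subgroup H with H <= K [H, G] lies in K:
   otherwise [H/K, G/K] would be a proper subgroup of H/K. *)
Lemma nil_sub_ker_commg (G H K : {group gT}) :
  nilpotent G -> K <| G -> H <| G -> H \subset K <*> [~: H, G] -> H \subset K.
Proof.
move=> nilG nsKG /andP[sHG nHG] sHKR; have nKG := normal_norm nsKG.
have nKH := subset_trans sHG nKG.
have sHGG : [~: H, G] \subset G by rewrite commg_subr normsG.
have sHq : H / K \subset [~: H / K, G / K].
  by rewrite -quotientR // -(quotientYidl (subset_trans sHGG nKG)) quotientS.
rewrite -quotient_sub1 // subG1; apply: contraLR sHq => ntHq.
have := nil_comm_properl (quotient_nil K nilG) (quotientS K sHG) ntHq (A := G / K).
by rewrite subsetI subxx quotient_norms // => /(_ isT) /andP[].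
Qed.

(* A subgroup of prime index is maximal, so it generates the whole group
   together with any element outside it. *)
Lemma joing_cycle_prime_index (H M : {group gT}) (y : gT) :
  M \subset H -> prime #|H : M| -> y \in H -> y \notin M -> M <*> <[y]> = H.
Proof.
move=> sMH prHM Hy notMy; have [_ maxM] := maxgroupP (p_index_maximal sMH prHM).
have sJH : M <*> <[y]> \subset H by rewrite join_subG sMH cycle_subG.
apply/eqP; rewrite eqEsubset sJH /=; apply: contraR notMy => not_sHJ.
rewrite -(maxM (M <*> <[y]>)%G) ?properE ?sJH ?joing_subl //.
by rewrite mem_gen // inE cycle_id orbT.
Qed.

Lemma expg_index_mem (H M : {group gT}) (y : gT) :
  M <| H -> y \in H -> y ^+ #|H : M| \in M.
Proof.
move=> /andP[_ nMH] Hy; have My := subsetP nMH y Hy.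
apply: coset_idr; first by rewrite groupX.
by rewrite morphX //= -card_quotient // expg_cardG // mem_quotient.
Qed.

(* If H = <x, y> Z with Z central and [x, y] in Z, then H' = <[x, y]>, and
   [x, y]^n = [x, y^n] = 1 whenever x commutes with y^n. *)
Lemma card_der1_two_gen (H Z : {group gT}) (x y : gT) (n : nat) :
  Z \subset 'C(H) -> <[x]> <*> <[y]> <*> Z = H -> [~ x, y] \in Z ->
  commute x (y ^+ n) -> (#|H^`(1)| %| n)%N.
Proof.
move=> cZH defH xyZ cx_yn; set XY := (<[x]> <*> <[y]>)%G.
have sXYH : XY \subset H by rewrite -defH joing_subl.
have sZH : Z \subset H by rewrite -defH joing_subr.
have cXYZ : Z \subset 'C(XY) := subset_trans cZH (centS sXYH).
have H'E : H^`(1) = XY^`(1).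
  have := der_cprod 1 (etrans (cprodEY cXYZ) defH).
  by rewrite (derG1P (subset_trans cZH (centS sZH))) cprodg1.
have cy_xy : commute y [~ x, y].
  apply/esym/(centP (subsetP cZH _ xyZ))/(subsetP sXYH).
  by rewrite mem_gen // inE cycle_id orbT.
rewrite H'E der1_joing_cycles ?(subsetP cXYZ) // -orderE order_dvdn -commgX //.
exact/commgP.
Qed.

(* A central subgroup of index p^2 leaves room for a derived subgroup of
   order at most p: H is generated over Z by two elements x, y with y^p in
   the abelian subgroup <x>Z. *)
Lemma card_der1_central_index_p2 (H Z : {group gT}) (p : nat) :
  prime p -> Z \subset 'Z(H) -> #|H : Z| = (p ^ 2)%N -> (#|H^`(1)| <= p)%N.
Proof.
move=> pr_p sZZH iHZ; have p_gt1 := prime_gt1 pr_p; have p_gt0 := ltnW p_gt1.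
have sZH := subset_trans sZZH (center_sub H).
have cZH : Z \subset 'C(H) := subset_trans sZZH (subsetIr _ _).
have nZH : H \subset 'N(Z) := normal_norm (sub_center_normal sZZH).
have abHZ : abelian (H / Z) by apply: (card_p2group_abelian pr_p); rewrite card_quotient.
have sH'Z : H^`(1) \subset Z := der1_min nZH abHZ.
have /subsetPn[x Hx notZx] : ~~ (H \subset Z).
  by rewrite -indexg_eq1 iHZ gtn_eqF // -{1}(expn0 p) ltn_exp2l.
set M := (<[x]> <*> Z)%G.
have sMH : M \subset H by rewrite join_subG cycle_subG Hx.
have sZM : Z \subset M := joing_subr _ _.
have xM : x \in M by rewrite mem_gen // inE cycle_id.
have abM : abelian M.
  rewrite abelianY cycle_abelian (abelianS sZZH (center_abelian H)) /=.
  by rewrite centsC (subset_trans (_ : <[x]> \subset H)) ?cycle_subG // centsC.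
have [m m_le2 iHM] : exists2 m, m <= 2 & #|H : M| = (p ^ m)%N.
  by apply/dvdn_pfactor; rewrite // -iHZ -(Lagrange_index sMH sZM) dvdn_mulr.
case: m m_le2 iHM => [|[|[|//]]] _ iHM.
- have abH : abelian H by rewrite (abelianS _ abM) // -indexg_eq1 iHM.
  by rewrite (derG1P abH) cards1.
- rewrite expn1 in iHM.
  have /subsetPn[y Hy notMy] : ~~ (H \subset M) by rewrite -indexg_eq1 iHM gtn_eqF.
  have defH : <[x]> <*> <[y]> <*> Z = H.
    by rewrite -joingA (joingC <[y]>) joingA (joing_cycle_prime_index sMH) ?iHM.
  have ypM : y ^+ p \in M.
    by rewrite -iHM expg_index_mem ?sub_der1_normal ?(subset_trans sH'Z).
  apply: dvdn_leq p_gt0 (card_der1_two_gen cZH defH _ _).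
    exact: subsetP sH'Z _ (mem_commg Hx Hy).
  exact: (centsP abM).
- have /negP[] : ~~ (M \subset Z) by apply/subsetPn; exists x.
  move: (Lagrange_index sMH sZM); rewrite iHZ iHM -{2}(muln1 (p ^ 2)%N) => /eqP.
  by rewrite eqn_pmul2l ?expn_gt0 ?p_gt0 // indexg_eq1.
Qed.

End GroupTheory.

Section DegreePCharacters.
Local Open Scope ring_scope.
Variables (gT : finGroupType) (G : {group gT}).

(* Clifford step: if A <| G, B <= A has index p and lies in Z(chi), and a
   constituent lambda of Res_A chi is G-invariant, then A <= Z(chi).  Indeed
   Res_A chi = c lambda, so Z(chi) and Z(lambda) agree on A; lambda is then
   linear, since lambda(1)^2 <= |A : Z(lambda)| <= p. *)
Lemma invariant_constt_cfcenter (A B : {group gT}) (p : nat) (i : Iirr G) (j : Iirr A) :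
  prime p -> (p.-group G)%g -> (A <| G)%g -> (B \subset A)%g -> #|A : B|%g = p ->
  (B \subset 'Z('chi_i)%CF)%g -> j \in irr_constt ('Res[A] 'chi_i) ->
  (G \subset 'I['chi_j])%g -> (A \subset 'Z('chi[G]_i)%CF)%g.
Proof.
move=> pr_p pG nsAG sBA iAB sBZ sj sGI; have sAG := normal_sub nsAG.
set c := '['Res[A] 'chi_i, 'chi_j].
have resE : 'Res[A] 'chi_i = c *: 'chi_j.
  by rewrite (Clifford_Res_sum_cfclass nsAG sj) cfclass_invariant // big_seq1.
have c_gt0 : 0 < c.
  by rewrite natr_gt0 ?Cnat_cfdot_char_irr ?cfRes_char ?irr_char // -irr_consttE.
have centerA : {in A, forall x, (x \in 'Z('chi_i)%CF) = (x \in 'Z('chi_j)%CF)}.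
  move=> x Ax; rewrite !irr_cfcenterE ?(subsetP sAG) // -!(cfResE _ sAG) ?group1 //.
  by rewrite resE !cfunE normrM (gtr0_norm c_gt0) (inj_eq (mulfI (lt0r_neq0 c_gt0))).
have sBZj : (B \subset 'Z('chi_j)%CF)%g.
  by apply/subsetP=> x Bx; rewrite -centerA ?(subsetP sBA) ?(subsetP sBZ).
have lin_j : 'chi_j \is a linear_char.
  apply: contraT => nlin_j.
  have ge_p := nonlinear_irr1_ge pr_p (pgroupS sAG pG) nlin_j.
  have le_p : ('chi_j 1%g) ^+ 2 <= p%:R.
    by rewrite (le_trans (irr1_bound j).1) // ler_nat -iAB dvdn_leq ?indexg_gt0 ?indexgS.
  have := le_trans (ler_pM (ler0n _ _) (ler0n _ _) ge_p ge_p) le_p.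
  by rewrite -expr2 -natrX ler_nat leqNgt expnS expn1 ltn_Pmull ?prime_gt1 ?prime_gt0.
apply/subsetP=> x Ax; rewrite centerA //.
by move: lin_j; rewrite -sub_cfcenter_irr_linear => /subsetP->.
Qed.

(* An irreducible character of degree p of a p-group is induced from a linear
   character of a subgroup T of index p; in particular T' <= ker chi. *)
Lemma irr_prime_degree_monomial (p : nat) (i : Iirr G) :
  prime p -> (p.-group G)%g -> 'chi_i 1%g = p%:R ->
  exists T : {group gT}, [/\ (T \subset G)%g, #|G : T|%g = p & (T^`(1) \subset cfker 'chi_i)%g].
Proof.
move=> pr_p pG chi1.
have not_sGZ : ~~ (G \subset 'Z('chi_i)%CF)%g.
  by rewrite sub_cfcenter_irr_linear irr_linearE chi1 pnatr_eq1 (gtn_eqF (prime_gt1 pr_p)).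
have [A [B [nsAG sBA iAB sBZ not_sAZ]]] := normal_index_p_step pr_p pG not_sGZ.
have [j sj] := constt_cfRes_irr A i.
pose T := 'I_G['chi_j]%G; have sTG : (T \subset G)%g := Inertia_sub G 'chi_j.
have not_sGT : ~~ (G \subset T)%g.
  apply: contra not_sAZ => sGT.
  exact: invariant_constt_cfcenter pr_p pG nsAG sBA iAB sBZ sj (subset_trans sGT (subsetIr _ _)).
have [indT _ imT _ _] := constt_Inertia_bijection j nsAG.
have : i \in irr_constt ('Ind[G] 'chi_j) by rewrite constt_Ind_Res.
rewrite -imT => /imsetP[s s_constt defi].
have chiE : 'chi_i = 'Ind[G] 'chi_s by rewrite defi /Ind_Iirr cfIirrE // indT.
have /eqP := chi1; rewrite chiE cfInd1 // irr1_degree -natrM eqr_nat => /eqP def_p.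
have iGT : #|G : T|%g = p.
  by apply/(prime_nt_dvdP pr_p); rewrite ?indexg_eq1 // -def_p dvdn_mulr.
have lin_s : 'chi_s \is a linear_char.
  move: def_p; rewrite irr_linearE irr1_degree pnatr_eq1 iGT -{2}(muln1 p) => /eqP.
  by rewrite eqn_pmul2l ?prime_gt0.
have nsTG : (T <| G)%g.
  by apply: (p_maximal_normal pG); apply: p_index_maximal; rewrite ?iGT.
by exists T; split; rewrite ?der1_sub_cfker_Ind_linear.
Qed.

(* Upper bound: a character of degree p yields an irreducible theta whose
   center has index exactly p^2 (theta is trivial on ker chi [G', G]). *)
Lemma cfcenter_index_p2_of_degree_p (p : nat) (i : Iirr G) :
  prime p -> (p.-group G)%g -> 'chi_i 1%g = p%:R ->
  exists k : Iirr G, #|G : 'Z('chi_k)%CF|%g = (p ^ 2)%N.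
Proof.
move=> pr_p pG chi1.
have [T [sTG iGT sT'K]] := irr_prime_degree_monomial pr_p pG chi1.
pose L := (cfker 'chi_i <*> [~: G^`(1), G])%G.
have nsRG : ([~: G^`(1), G] <| G)%g.
  have sRG' : ([~: G^`(1), G] \subset G^`(1))%g by rewrite commg_subl der_norm.
  by rewrite /normal commg_normr (subset_trans sRG') ?der_sub.
have nsLG : (L <| G)%g := normalY (cfker_normal _) nsRG.
have nlin_i : ~~ ('chi_i \is a linear_char).
  by rewrite irr_linearE chi1 pnatr_eq1 (gtn_eqF (prime_gt1 pr_p)).
have not_sG'L : ~~ (G^`(1) \subset L)%g.
  apply: contra nlin_i => sG'L; rewrite lin_irr_der1.
  exact: nil_sub_ker_commg (pgroup_nil pG) (cfker_normal _) (der_normal 1 G) sG'L.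
have [k [nlin_k sLK]] := nonlinear_irr_mod nsLG not_sG'L.
have sT'Kk : (T^`(1) \subset cfker 'chi_k)%g.
  exact: subset_trans sT'K (subset_trans (joing_subl _ _) sLK).
have chik1 : 'chi_k 1%g = p%:R.
  apply/eqP; rewrite eq_le nonlinear_irr1_ge // andbT -iGT.
  exact: irr1_le_index_der1_ker.
exists k; apply/eqP; rewrite -(eqr_nat algC) natrX -chik1.
by rewrite irr1_sq_index_cfcenter // (subset_trans (joing_subr _ _) sLK).
Qed.

(* Commutator index: with X = Z(chi) of index p^2 and N = [X, G], X/N is
   central of index p^2 in G/N, so 1 < |G' : N| = |(G/N)'| <= p. *)
Lemma index_der1_commg_cfcenter (p : nat) (i : Iirr G) :
  prime p -> (p.-group G)%g -> ~~ ('chi_i \is a linear_char) ->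
  #|G : 'Z('chi_i)%CF|%g = (p ^ 2)%N -> #|G^`(1) : [~: 'Z('chi_i)%CF, G]|%g = p.
Proof.
move=> pr_p pG nlin_i iGZ; set X := [group of 'Z('chi_i)%CF]; set N := [~: X, G]%G.
have nXG : (G \subset 'N(X))%g := normal_norm (cfcenter_normal _).
have sXG : (X \subset G)%g := cfcenter_sub _.
have nsNG : (N <| G)%g.
  by rewrite /normal (subset_trans _ sXG) ?commg_subl ?commg_normr.
have nNG := normal_norm nsNG; have nG'N := subset_trans (der_sub 1 G) nNG.
have iG'N : #|G^`(1) : N|%g = #|(G / N)^`(1)|%g by rewrite -card_quotient // quotient_der.
have sXNZ : (X / N \subset 'Z(G / N))%g.
  by rewrite subsetI quotientS //= quotient_cents2 ?(subset_trans sXG nNG).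
have iGNX : #|G / N : X / N|%g = (p ^ 2)%N.
  by rewrite index_quotient_eq // subIset // commg_subl nXG orbT.
have le_p := card_der1_central_index_p2 pr_p sXNZ iGNX; rewrite -iG'N in le_p.
have gt1 : (1 < #|G^`(1) : N|%g)%N.
  rewrite indexg_gt1; apply: contra nlin_i => sG'N.
  by rewrite lin_irr_der1 (subset_trans sG'N) ?commg_cfcenter_sub_cfker.
have [k defk] := p_natP (pnat_dvd (dvdn_indexg (G^`(1))%g N) (pgroupS (der_sub 1 G) pG)).
move: gt1 le_p; rewrite defk; case: k {defk} => [|[|k]]; rewrite ?expn0 ?expn1 // => _.
by rewrite leqNgt -{1}(expn1 p) ltn_exp2l ?(prime_gt1 pr_p).
Qed.

End DegreePCharacters.

Theorem mainTheorem18 (gT : finGroupType) (G X1 : {group gT}) (p : nat) :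
  prime p -> (p.-group G)%g -> nested G -> chain_X1 G X1 ->
  in_cd G (p%:R : algC)%R ->
  (#|G : X1|%g = (p ^ 2)%N) /\ (#|(G^`(1))%g : [~: X1, G]%g|%g = p).
Proof.
move=> pr_p pG _ [[j defX1] prX1 maxX1] [i chi1].
have nlin_j : (~~ ('chi[G]_j \is a linear_char))%R.
  by rewrite -sub_cfcenter_irr_linear defX1; case/andP: prX1.
have [k iGZk] := cfcenter_index_p2_of_degree_p pr_p pG chi1.
have p2_gt1 : (1 < p ^ 2)%N by rewrite -{1}(expn0 p) ltn_exp2l ?prime_gt1.
have sZkX1 : ('Z(('chi[G]_k)%R)%CF \subset X1)%g.
  by apply: maxX1; rewrite properE cfcenter_sub -indexg_eq1 iGZk gtn_eqF.
have iGX1 : #|G : X1|%g = (p ^ 2)%N.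
  apply/eqP; rewrite eqn_leq -{2}defX1 cfcenter_index_ge_p2 // andbT.
  by rewrite -iGZk dvdn_leq ?indexg_gt0 ?indexgS.
split=> //; rewrite -defX1; apply: index_der1_commg_cfcenter nlin_j _ => //.
by move: iGX1; rewrite -defX1.
Qed.
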